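(* Let $(S,* )$ be a finite cycle set of class $d$ with permutation group $\mathcal G$. Then $d$ and $|\mathcal G|$ have the same set of prime divisors. In particular, $d$ is a prime power if and only if $|\mathcal G|$ is a prime power.
   Context: A cycle set is a set $S$ with a binary operation $*$ such that each $t\mapsto s*t$ is bijective and $(s*t)*(s*u)=(t*s)*(t*u)$ for all $s,t,u$. Write $S=\{s_1,\dots,s_n\}$, let $\psi(s)\in\mathfrak S_n$ satisfy $s_i*s_j=s_{\psi(s_i)(j)}$, and $\mathcal G=\langle\psi(s_1),\dots,\psi(s_n)\rangle\le\mathfrak S_n$. With $T(s)=s*s$ and $\psi_k(s)=\psi(T^{k-1}(s))\circ\cdots\circ\psi(s)$, the class $d$ is the least integer $d\ge1$ with $\psi_d(s)=\mathrm{id}$ for all $s\in S$. *)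

From mathcomp Require Import all_boot all_fingroup.
Set Implicit Arguments. Unset Strict Implicit. Unset Printing Implicit Defensive.
Local Open Scope group_scope.

Record cycleSet (S : finType) := CycleSet {
  cs_op : S -> S -> S;
  cs_bij : forall s, bijective (cs_op s);
  cs_ax : forall s t u,
    cs_op (cs_op s t) (cs_op s u) = cs_op (cs_op t s) (cs_op t u)
}.

Section CycleSetDefs.
Variables (S : finType) (C : cycleSet S).

Definition psi (s : S) : {perm S} := perm (bij_inj (cs_bij C s)).

Definition permGroup : {group {perm S}} := <<[set psi s | s in S]>>%G.

Definition Tsq (s : S) : S := cs_op C s s.

(* psi_k(s) = psi(T^{k-1} s) o ... o psi(s)  (psi(s) applied first).
   In mathcomp, (p * q) x = q (p x), so we multiply on the right. *)
Fixpoint psik (k : nat) (s : S) : {perm S} :=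
  match k with
  | 0 => 1
  | k'.+1 => psik k' s * psi (iter k' Tsq s)
  end.

Definition is_class (d : nat) : Prop :=
  [/\ 0 < d, (forall s, psik d s = 1)
    & (forall d', 0 < d' < d -> ~ (forall s, psik d' s = 1))].

End CycleSetDefs.

Definition prime_power (n : nat) : Prop :=
  exists p k, prime p /\ n = (p ^ k)%N.

From mathcomp Require Import all_boot all_fingroup pgroup cyclic sylow.
Set Implicit Arguments. Unset Strict Implicit. Unset Printing Implicit Defensive.
Local Open Scope group_scope.

(* Extend psi multiplicatively to words over S.  The cycle set identity makes
   the resulting permutation independent of the order of the letters, it
   satisfies word_perm (v ++ w) = word_perm v * word_perm (word_perm v w), and
   on the constant word s^k it equals psi_k(s).  Hence, d being the class,
   word_perm only depends on the multiplicities of the letters modulo d; this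
   gives a map from (Z/d)^S onto G whose fibres all have the same size, so |G|
   divides d^|S|.  Conversely, let p be a prime dividing d but not |G| and put
   D = d/p.  If psi_D(s) <> 1, then g |-> g psi_D(g s) is a permutation of G of
   order p without fixed points, forcing p to divide |G|; so psi_D = 1, against
   the minimality of d. *)

Lemma perm_foldl (T : eqType) (R : Type) (f : R -> T -> R) :
  (forall r x y, f (f r x) y = f (f r y) x) ->
  forall r s t, perm_eq s t -> foldl f r s = foldl f r t.
Proof.
move=> fC r s; elim: s r => [|x s IHs] r t.
  by rewrite perm_sym => /perm_nilP->.
move=> eq_st; have x_t : x \in t by rewrite -(perm_mem eq_st) mem_head.
move: eq_st; case/splitPr: x_t => t1 t2 eq_st.
have pull r' u : foldl f r' (u ++ x :: t2) = foldl f (f r' x) (u ++ t2).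
  by elim: u r' => //= y u IHu r'; rewrite IHu fC.
rewrite pull /=; apply: IHs; rewrite -(perm_cons x) (perm_trans eq_st) //.
by rewrite perm_sym -cat1s perm_catCA.
Qed.

Lemma prime_dvd_card_fixfree_iter (T : finType) (f : T -> T) p :
  prime p -> (forall x, iter p f x = x) -> (forall x, f x != x) -> p %| #|T|.
Proof.
move=> p_pr fp fixfree.
have f_inj : injective f.
  by apply: (can_inj (g := iter p.-1 f)) => x; rewrite -iterSr prednK ?prime_gt0.
pose g := perm f_inj.
have gp : g ^+ p = 1.
  by apply/permP => x; rewrite permX perm1 (eq_iter (permE f_inj)).
have pg : p.-group <[g]>.
  by rewrite /pgroup -orderE (pnat_dvd _ (pnat_id p_pr)) // order_dvdn gp.
have actT : [acts <[g]>, on [set: T] | 'P] by apply/actsP => a _ x; rewrite !inE.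
have noFix : 'Fix_([set: T] | 'P)(<[g]>) = set0.
  apply/setP => x; rewrite afix_cycle !inE sub1set inE /= /aperm permE.
  exact: negbTE (fixfree x).
by have := pgroup_fix_mod pg actT; rewrite noFix cards0 cardsT mod0n /dvdn => ->.
Qed.

Lemma prime_dvd_card_fixfree (T : finType) (A : {set T}) (f : T -> T) p :
  prime p -> {in A, forall x, f x \in A} -> {in A, forall x, iter p f x = x} ->
  {in A, forall x, f x != x} -> p %| #|A|.
Proof.
move=> p_pr fA fpA fixfreeA.
pose fA' (x : {x | x \in A}) : {x | x \in A} :=
  exist _ (f (val x)) (fA _ (valP x)).
have iter_val k x : val (iter k fA' x) = iter k f (val x).
  by elim: k => //= k ->.
rewrite -card_sig; apply: (prime_dvd_card_fixfree_iter (f := fA')) => // x.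
  by apply: val_inj; rewrite iter_val fpA ?(valP x).
by rewrite -(inj_eq val_inj) fixfreeA ?(valP x).
Qed.

Lemma prime_power_transfer m n : 0 < n ->
  (forall p, prime p -> (p %| m) = (p %| n)) -> prime_power m -> prime_power n.
Proof.
move=> n_gt0 same_primes [p [k [p_pr em]]]; exists p, (logn p n); split => //.
have pn : p.-nat n.
  apply/pnatP => // q q_pr.
  by rewrite -same_primes // em Euclid_dvdX // dvdn_prime2 // => /andP[].
by rewrite -p_part part_pnat_id.
Qed.

Definition mult_word (T : finType) (v : T -> nat) : seq T :=
  flatten [seq nseq (v x) x | x <- enum T].

Lemma count_mult_word (T : finType) (v : T -> nat) y :
  count_mem y (mult_word v) = v y.
Proof.
rewrite count_flatten -map_comp sumnE big_map big_enum (bigD1 y) //=.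
rewrite count_nseq /= eqxx mul1n big1 ?addn0 // => x /negbTE.
by rewrite count_nseq /= eq_sym => ->.
Qed.

Lemma perm_count_mem (T : eqType) (s t : seq T) :
  (forall x, count_mem x s = count_mem x t) -> perm_eq s t.
Proof. by move=> eq_cnt; apply/allP => x _ /=; rewrite eq_cnt. Qed.

Section CycleSetWords.
Variables (S : finType) (C : cycleSet S).
Local Notation G := (permGroup C).

Lemma psiE s t : psi C s t = cs_op C s t.
Proof. by rewrite /psi permE. Qed.

Lemma psik_self k s : psik C k s s = iter k (Tsq C) s.
Proof. by elim: k => [|k IHk] /=; rewrite ?perm1 // permM IHk psiE. Qed.

Definition word_step (g : {perm S}) (x : S) : {perm S} := g * psi C (g x).

Definition word_perm (w : seq S) : {perm S} := foldl word_step 1 w.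

Lemma word_stepC g x y :
  word_step (word_step g x) y = word_step (word_step g y) x.
Proof.
by apply/permP => u; rewrite /word_step -!mulgA !permM !psiE cs_ax.
Qed.

Lemma perm_word_perm v w : perm_eq v w -> word_perm v = word_perm w.
Proof. exact: perm_foldl word_stepC 1 v w. Qed.

Lemma foldl_word_stepM g h w :
  foldl word_step (g * h) w = g * foldl word_step h (map g w).
Proof.
elim: w h => [|x w IHw] h //=.
by rewrite -IHw /word_step permM mulgA.
Qed.

Lemma word_perm_cat v w :
  word_perm (v ++ w) = word_perm v * word_perm (map (word_perm v) w).
Proof. by rewrite /word_perm foldl_cat -foldl_word_stepM mulg1. Qed.

Lemma word_perm1 x : word_perm [:: x] = psi C x.
Proof. by rewrite /word_perm /= /word_step mul1g perm1. Qed.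

Lemma word_perm_nseq k s : word_perm (nseq k s) = psik C k s.
Proof.
elim: k => // k IHk; rewrite -addn1 nseqD cats1 /word_perm foldl_rcons.
by rewrite -/(word_perm _) IHk /word_step psik_self addn1.
Qed.

Lemma word_perm_catl v w : word_perm v = 1 -> word_perm (v ++ w) = word_perm w.
Proof.
by move=> v1; rewrite word_perm_cat v1 mul1g (eq_map (fun x => perm1 x)) map_id.
Qed.

Lemma mem_word_perm w : word_perm w \in G.
Proof.
suff foldl_in g : g \in G -> foldl word_step g w \in G by apply/foldl_in/group1.
elim: w g => //= x w IHw g Gg; apply/IHw/groupM => //.
by apply/mem_gen/imset_f.
Qed.

Lemma word_permP g : reflect (exists w, g = word_perm w) (g \in G).
Proof.
apply: (iffP idP) => [|[w ->]]; last exact: mem_word_perm.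
case/gen_prodgP => n [c Ac ->]; elim: n c Ac => [|n IHn] c Ac.
  by exists [::]; rewrite big_ord0.
rewrite big_ord_recr /=; have /imsetP[x _ ->] := Ac ord_max.
have [w ->] := IHn (fun i => c (widen_ord (leqnSn n) i)) (fun i => Ac _).
exists (w ++ [:: (word_perm w)^-1 x]).
by rewrite word_perm_cat /= permKV word_perm1.
Qed.

Lemma psik_eq1_act D t g :
  g \in G -> psik C D t = 1 -> psik C D (g t) = 1.
Proof.
case/word_permP => w -> Dt1; apply: (mulgI (word_perm w)).
rewrite mulg1 -word_perm_nseq -map_nseq -word_perm_cat.
rewrite (perm_word_perm (permEl (perm_catC _ _))).
by rewrite word_perm_catl // word_perm_nseq.
Qed.

Lemma psik_eq1_of_prime_factor D p :
  prime p -> (forall s, psik C (D * p) s = 1) -> ~~ (p %| #|G|) ->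
  forall s, psik C D s = 1.
Proof.
move=> p_pr Dp1 pG s; apply/eqP; apply: contraNT pG => Ds1.
pose F (g : {perm S}) := g * psik C D (g s).
have iterF k w : iter k F (word_perm w) = word_perm (w ++ nseq (k * D) s).
  elim: k => [|k /= ->]; first by rewrite cats0.
  by rewrite /F -word_perm_nseq -map_nseq -word_perm_cat mulSnr nseqD catA.
apply: (prime_dvd_card_fixfree (f := F) p_pr) => g Gg.
- by rewrite groupM // -word_perm_nseq mem_word_perm.
- have [w ->] := word_permP _ Gg.
  rewrite iterF [(p * D)%N]mulnC (perm_word_perm (permEl (perm_catC _ _))).
  by rewrite word_perm_catl // word_perm_nseq Dp1.
- apply: contra Ds1 => /eqP FGg.
  have /(psik_eq1_act (groupVr Gg)) : psik C D (g s) = 1.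
    by apply: (mulgI g); rewrite mulg1.
  by rewrite permK => ->.
Qed.

Section Class.
Variables (d : nat) (d_gt0 : 0 < d) (class_d : forall s, psik C d s = 1).

Lemma word_perm_nseq_period q x : word_perm (nseq (q * d) x) = 1.
Proof.
elim: q => [|q IHq]; rewrite ?mul0n // mulSn nseqD.
by rewrite word_perm_catl ?IHq // word_perm_nseq.
Qed.

Lemma word_perm_mod v w :
  (forall x, count_mem x v = count_mem x w %[mod d]) -> word_perm v = word_perm w.
Proof.
have blocks_eq1 (q : S -> nat) : word_perm (mult_word (fun x => (q x * d)%N)) = 1.
  rewrite /mult_word; elim: (enum S) => //= x e IHe.
  by rewrite word_perm_catl ?word_perm_nseq_period.
have reduce u : word_perm u = word_perm (mult_word (fun x => count_mem x u %% d)).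
  rewrite -(word_perm_catl (mult_word (fun x => count_mem x u %% d))
                           (blocks_eq1 (fun x => count_mem x u %/ d))).
  apply/perm_word_perm/perm_count_mem => x.
  by rewrite count_cat !count_mult_word -divn_eq.
move=> eq_cnt; rewrite (reduce v) (reduce w).
by apply/perm_word_perm/perm_count_mem => x; rewrite !count_mult_word eq_cnt.
Qed.

Definition count_mod (w : seq S) : {ffun S -> 'I_d} :=
  [ffun x => Ordinal (ltn_pmod (count_mem x w) d_gt0)].

Definition mult_perm (a : {ffun S -> 'I_d}) : {perm S} :=
  word_perm (mult_word (fun x => a x)).

Lemma mult_perm_count_mod w : mult_perm (count_mod w) = word_perm w.
Proof.
by apply: word_perm_mod => x; rewrite count_mult_word ffunE /= modn_mod.
Qed.

Definition fiber (g : {perm S}) := [set a | mult_perm a == g].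

Lemma card_fiber_mulg w g : #|fiber g| <= #|fiber (word_perm w * g)|.
Proof.
set h := word_perm w.
(* [shift] lifts left multiplication by [h] to multiplicity vectors. *)
pose shift (k : {ffun S -> 'I_d}) :=
  count_mod (w ++ map h^-1 (mult_word (fun x => k x))).
have shiftE k y : shift k (h^-1 y) = (count_mem (h^-1 y) w + k y) %% d :> nat.
  rewrite ffunE /= count_cat count_map.
  rewrite (@eq_count _ (preim h^-1 (pred1 (h^-1 y))) (pred1 y)).
    by rewrite count_mult_word.
  by move=> z /=; rewrite (inj_eq perm_inj).
have shift_inj : injective shift.
  move=> k k' /ffunP eq_shift; apply/ffunP => y; apply: val_inj.
  have := congr1 val (eq_shift (h^-1 y)); rewrite /= !shiftE => /eqP.
  by rewrite eqn_modDl !modn_small // => /eqP.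
rewrite -(card_imset _ shift_inj).
apply/subset_leq_card/subsetP => _ /imsetP[k + ->].
rewrite !inE => /eqP <-; rewrite mult_perm_count_mod word_perm_cat -/h.
by rewrite -map_comp (eq_map (permKV h)) map_id.
Qed.

Lemma card_fiber g : g \in G -> #|fiber g| = #|fiber 1|.
Proof.
case/word_permP => w ->.
have [w' Ew'] := word_permP _ (groupVr (mem_word_perm w)).
apply/eqP; rewrite eqn_leq; apply/andP; split.
  by have := card_fiber_mulg w' (word_perm w); rewrite -Ew' mulVg.
by have := card_fiber_mulg w 1; rewrite mulg1.
Qed.

Lemma card_permGroup_dvd : #|G| %| (d ^ #|S|)%N.
Proof.
suff -> : (d ^ #|S| = #|G| * #|fiber 1|)%N by apply: dvdn_mulr.
rewrite -{1}[d]card_ord -card_ffun -[LHS]sum1_card.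
rewrite (partition_big mult_perm (mem G)) /=.
  rewrite -sum_nat_const; apply: eq_bigr => g Gg.
  by rewrite -(card_fiber Gg) sum1dep_card.
by move=> a _; apply: mem_word_perm.
Qed.

End Class.

End CycleSetWords.

Theorem mainTheorem6 (S : finType) (C : cycleSet S) (d : nat) :
  is_class C d ->
  (forall p : nat, prime p -> (p %| d) = (p %| #|permGroup C|)) /\
  (prime_power d <-> prime_power #|permGroup C|).
Proof.
case=> d_gt0 class_d minimal_d.
have same_primes p : prime p -> (p %| d) = (p %| #|permGroup C|).
  move=> p_pr; apply/idP/idP => [p_d | p_G].
    apply: contraT => p'G; case: (minimal_d (d %/ p)).
      by rewrite divn_gt0 ?prime_gt0 // (dvdn_leq d_gt0 p_d) ltn_Pdiv ?prime_gt1.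
    by apply: (psik_eq1_of_prime_factor p_pr) => //; rewrite divnK.
  have := dvdn_trans p_G (card_permGroup_dvd d_gt0 class_d).
  by rewrite Euclid_dvdX // => /andP[].
split => //; split; apply: prime_power_transfer => // p p_pr.
by rewrite same_primes.
Qed.
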